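(* Let $R$ be a commutative Dedekind domain with field of fractions $Q$, and for each maximal ideal $P$ let $R_P$ be the localization at $P$. Then the torsion submodule of $\prod_P Q/R_P$ (product over all maximal ideals $P$) is $\bigoplus_P Q/R_P$. If moreover $R$ is not semilocal, $|R|=\alpha$, the set of maximal ideals has cardinality $\beta$, and $\alpha<\alpha^\beta$, then $Q\oplus\prod_P Q/R_P\cong\prod_P Q/R_P$ as $R$-modules.
   Context: $Q/R_P\cong E(R/P)$, the injective envelope of $R/P$. *)

From HB Require Import structures.
From mathcomp Require Import all_boot all_order all_algebra fraction.
From Stdlib Require List.
Set Implicit Arguments. Unset Strict Implicit. Unset Printing Implicit Defensive.
Import GRing.Theory.
Notation "x %:F" := (@FracField.tofrac _ x) : ring_scope.
Notation tofrac := (@FracField.tofrac _).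

Local Open Scope ring_scope.

Section Dedekind.
Variable R : idomainType.

Definition is_ideal (S : {pred R}) : Prop :=
  0 \in S /\ forall a u v, u \in S -> v \in S -> a * u + v \in S.

Definition fin_gen_ideal (S : {pred R}) : Prop :=
  exists s : seq R, forall x, x \in S <->
    exists c : seq R, size c = size s /\ x = \sum_(i < size s) c`_i * s`_i.

Definition noetherian_ring : Prop :=
  forall S : {pred R}, is_ideal S -> fin_gen_ideal S.

Definition prime_ideal (P : {pred R}) : Prop :=
  [/\ is_ideal P, 1 \notin P & forall u v, u * v \in P -> u \in P \/ v \in P].

Definition maximal_ideal (P : {pred R}) : Prop :=
  [/\ is_ideal P, 1 \notin P &
      forall J : {pred R}, is_ideal J -> {subset P <= J} -> 1 \notin J ->
        {subset J <= P}].

Definition integrally_closed : Prop :=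
  forall q : {fraction R},
    (exists p : {poly R}, p \is monic /\ root (map_poly tofrac p) q) ->
    exists a : R, q = a%:F.

Definition dedekind_domain : Prop :=
  [/\ noetherian_ring, integrally_closed &
      forall P : {pred R}, prime_ideal P -> (exists2 x, x \in P & x != 0) ->
        maximal_ideal P].

Record maxideal := MaxIdeal { mi_pred :> {pred R}; mi_max : maximal_ideal mi_pred }.

Definition in_loc (P : maxideal) (q : {fraction R}) : Prop :=
  exists a s : R, s \notin (P : {pred R}) /\ q = a%:F / s%:F.

(* The module prod_P Q/R_P: representatives are families f : maxideal -> Q,
   two representatives being equal in the product iff they agree in every
   coordinate Q/R_P. *)
Definition prodQ := maxideal -> {fraction R}.

Definition prod_eq (f g : prodQ) : Prop := forall P, in_loc P (f P - g P).

Definition prod_add (f g : prodQ) : prodQ := fun P => f P + g P.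
Definition prod_scale (r : R) (f : prodQ) : prodQ := fun P => r%:F * f P.

Definition prod_torsion (f : prodQ) : Prop :=
  exists2 r : R, r != 0 & prod_eq (prod_scale r f) (fun _ => 0).

Definition prod_in_dsum (f : prodQ) : Prop :=
  exists l : list maxideal, forall P, ~ in_loc P (f P) -> List.In P l.

Definition semilocal : Prop := exists l : list maxideal, forall P, List.In P l.

Definition sumQ := ({fraction R} * prodQ)%type.
Definition sum_eq (x y : sumQ) : Prop := x.1 = y.1 /\ prod_eq x.2 y.2.
Definition sum_add (x y : sumQ) : sumQ := (x.1 + y.1, prod_add x.2 y.2).
Definition sum_scale (r : R) (x : sumQ) : sumQ := (r%:F * x.1, prod_scale r x.2).

Definition sum_prod_iso (phi : sumQ -> prodQ) : Prop :=
  [/\ forall x y, sum_eq x y -> prod_eq (phi x) (phi y),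
      forall x y, prod_eq (phi (sum_add x y)) (prod_add (phi x) (phi y)),
      forall r x, prod_eq (phi (sum_scale r x)) (prod_scale r (phi x)),
      forall x y, prod_eq (phi x) (phi y) -> sum_eq x y &
      forall g, exists x, prod_eq (phi x) g].

End Dedekind.

Definition card_lt (A B : Type) : Prop :=
  (exists f : A -> B, injective f) /\ ~ (exists g : B -> A, injective g).

(* A nonzero [r] lies in only finitely many maximal ideals, since [(r)] contains
   a product of nonzero primes, which are maximal.  Hence [r f = 0] in
   [prod_P Q/R_P] forces [f_P \in R_P] for almost all [P]; conversely finitely
   many coordinates have a common denominator.

   If [R] has infinitely many maximal ideals, split a sequence of them into
   infinitely many infinite families and let [g_i] be [1/x_P] on the [i]-th
   family, with [0 != x_P \in P]; the [g_i] are Q-linearly independent modulo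
   [prod_P R_P].  By Zorn's lemma some submodule [W] is maximal among those
   meeting the Q-span of the [g_i] trivially, and then every [m] is uniquely
   [sum_i c_i g_i + w] with [w \in W].  Shifting the basis,
   [(q, sum_i c_i g_i + w) |-> q g_0 + sum_i c_i g_(i+1) + w] is an isomorphism
   [Q (+) prod_P Q/R_P ~= prod_P Q/R_P]. *)

From Pilot Require Import Defs.
From HB Require Import structures.
From mathcomp Require Import all_boot all_order all_algebra fraction.
From Stdlib Require List.
From mathcomp Require Import generic_quotient boolp wochoice.
Set Implicit Arguments. Unset Strict Implicit. Unset Printing Implicit Defensive.
Import GRing.Theory.
Local Open Scope ring_scope.
Local Open Scope quotient_scope.

Section Ideals.
Variable R : idomainType.
Implicit Types (I P : {pred R}) (L : list {pred R}).

Lemma ideal0 I : is_ideal I -> 0 \in I.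
Proof. by case. Qed.

Lemma idealD I u v : is_ideal I -> u \in I -> v \in I -> u + v \in I.
Proof. by move=> [_ Ic] uI vI; rewrite -[u]mul1r; apply: Ic. Qed.

Lemma idealMl I a u : is_ideal I -> u \in I -> a * u \in I.
Proof. by move=> [I0 Ic] uI; rewrite -[_ * _]addr0; apply: Ic. Qed.

Lemma idealMr I a u : is_ideal I -> u \in I -> u * a \in I.
Proof. by rewrite mulrC; apply: idealMl. Qed.

Lemma ideal_sum I n (c s : seq R) :
  is_ideal I -> (forall i, (i < n)%N -> s`_i \in I) ->
  \sum_(i < n) c`_i * s`_i \in I.
Proof.
move=> hI hs; apply: (big_ind (fun x => x \in I)); first exact: ideal0.
  by move=> x y; apply: idealD.
by move=> i _; apply/idealMl/hs.
Qed.

(* The product ideal [Q_1 ... Q_n] lies in [I] iff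
   [all_products [:: Q_1; ...; Q_n] (fun y => y \in I)]. *)
Fixpoint all_products L (K : R -> Prop) : Prop :=
  if L is Q :: L' then forall x, x \in Q -> all_products L' (fun y => K (x * y))
  else K 1.

Lemma all_products_mono L (K K' : R -> Prop) :
  (forall y, K y -> K' y) -> all_products L K -> all_products L K'.
Proof.
elim: L K K' => [|Q L IH] K K' hK /=; first exact: hK.
by move=> h x xQ; apply: IH (h x xQ) => y; apply: hK.
Qed.

Lemma all_products_cat L1 L2 (K1 K2 K : R -> Prop) :
  all_products L1 K1 -> all_products L2 K2 ->
  (forall y z, K1 y -> K2 z -> K (y * z)) -> all_products (L1 ++ L2) K.
Proof.
elim: L1 K1 K => [|Q L IH] K1 K /= h1 h2 hK.
  by apply: all_products_mono h2 => z hz; rewrite -[z]mul1r; apply: hK h1 hz.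
move=> x xQ; apply: IH (h1 x xQ) h2 _ => y z hy hz.
by rewrite mulrA; apply: hK.
Qed.

Lemma all_products_avoid_prime L (K : R -> Prop) P :
  prime_ideal P -> all_products L K ->
  (forall Q, List.In Q L -> exists2 x, x \in Q & x \notin P) ->
  exists2 y, K y & y \notin P.
Proof.
move=> [_ P1 Pp]; elim: L K => [|Q L IH] K /= hL hQ; first by exists 1.
have [x xQ xP] := hQ Q (or_introl erefl).
have [y hy yP] := IH _ (hL x xQ) (fun Q' hQ' => hQ Q' (or_intror hQ')).
by exists (x * y) => //; apply/negP => /Pp [] hxy; [move: xP | move: yP]; rewrite hxy.
Qed.

Definition contains_prime_product I : Prop :=
  exists L, (forall Q, List.In Q L -> prime_ideal Q /\ {subset I <= Q}) /\
            all_products L (fun y => y \in I).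

Definition ideal_adjoin I u : {pred R} :=
  fun x => `[< exists a b, b \in I /\ x = a * u + b >].

Lemma ideal_adjoin_ideal I u : is_ideal I -> is_ideal (ideal_adjoin I u).
Proof.
move=> [I0 Ic]; split.
  by apply/asboolP; exists 0, 0; split => //; rewrite mul0r addr0.
move=> a x y /asboolP [a1 [b1 [hb1 ->]]] /asboolP [a2 [b2 [hb2 ->]]].
apply/asboolP; exists (a * a1 + a2), (a * b1 + b2); split; first exact: Ic.
by rewrite mulrDr mulrA addrACA -mulrDl.
Qed.

Lemma ideal_adjoin_sub I u : {subset I <= ideal_adjoin I u}.
Proof. by move=> x xI; apply/asboolP; exists 0, x; rewrite mul0r add0r. Qed.

Lemma ideal_adjoin_mem I u : is_ideal I -> u \in ideal_adjoin I u.
Proof. by move=> [I0 _]; apply/asboolP; exists 1, 0; rewrite mul1r addr0. Qed.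

(* If [uv] is in [I] but [u, v] are not, and [I + (u)], [I + (v)] contain prime
   products, then so does [I], since [(I + (u)) (I + (v))] lies in [I]. *)
Lemma no_prime_product_strict_sup I :
  is_ideal I -> ~ contains_prime_product I ->
  exists J, [/\ is_ideal J, ~ contains_prime_product J, {subset I <= J} &
               exists2 x, x \in J & x \notin I].
Proof.
move=> hI bad.
have [u [v [uv uI vI]]] : exists u v, [/\ u * v \in I, u \notin I & v \notin I].
  have I1 : 1 \notin I by apply/negP => I1; apply: bad; exists nil.
  apply: contrapT => hn; apply: bad; exists [:: I]; split; last first.
    by move=> x /= xI; rewrite mulr1.
  move=> _ [<-|//]; split=> //; split=> // a b ab.
  by apply: contrapT => /not_orP [/negP aI /negP bI]; apply: hn; exists a, b.
have good_adjoin w : w \notin I -> ~ contains_prime_product (ideal_adjoin I w) ->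
    exists J, [/\ is_ideal J, ~ contains_prime_product J, {subset I <= J} &
               exists2 x, x \in J & x \notin I].
  move=> wI hw; exists (ideal_adjoin I w); split => //.
  - exact: ideal_adjoin_ideal.
  - exact: ideal_adjoin_sub.
  - by exists w => //; apply: ideal_adjoin_mem.
have [[L1 [hL1 pc1]]|] := pselect (contains_prime_product (ideal_adjoin I u));
  last exact: good_adjoin uI.
have [[L2 [hL2 pc2]]|] := pselect (contains_prime_product (ideal_adjoin I v));
  last exact: good_adjoin vI.
exfalso; apply: bad; exists (L1 ++ L2); split.
  move=> Q /(List.in_app_or _ _ _) [/hL1|/hL2] [pQ sQ]; split=> // x xI;
    by apply/sQ/ideal_adjoin_sub.
apply: (all_products_cat pc1 pc2) => _ _ /asboolP [a1 [b1 [hb1 ->]]]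
  /asboolP [a2 [b2 [hb2 ->]]].
rewrite mulrDl mulrDr mulrACA.
apply: (idealD hI (idealD hI (idealMl _ hI uv) (idealMl _ hI hb2))).
exact: idealMr.
Qed.

Lemma noetherian_chain_stationary (c : nat -> {pred R}) :
  noetherian_ring R -> (forall n, is_ideal (c n)) ->
  (forall n, {subset c n <= c n.+1}) -> exists N, {subset c N.+1 <= c N}.
Proof.
move=> hN hc incr.
have mono m k : {subset c m <= c (m + k)%N}.
  by elim: k => [|k IH] x; rewrite ?addn0 // addnS => /IH /incr.
pose U : {pred R} := fun x => `[< exists n, x \in c n >].
have hU : is_ideal U.
  split; first by apply/asboolP; exists 0%N; apply: ideal0.
  move=> a u v /asboolP [n un] /asboolP [m vm]; apply/asboolP; exists (n + m)%N.
  by have [_ ->] := hc (n + m)%N; [|apply: mono | rewrite addnC; apply: mono].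
have [s hs] := hN U hU.
have sU i : (i < size s)%N -> s`_i \in U.
  move=> hi; apply/hs; exists [seq (j == i)%:R | j <- iota 0 (size s)].
  rewrite size_map size_iota; split => //.
  rewrite (bigD1 (Ordinal hi)) //= (nth_map 0%N) ?size_iota // nth_iota //.
  rewrite eqxx mul1r big1 ?addr0 // => j ji.
  rewrite (nth_map 0%N) ?size_iota // nth_iota // add0n.
  by rewrite (_ : (j == i :> nat) = false) ?mul0r //; apply/negbTE.
have [N sN] : exists N, forall i, (i < size s)%N -> s`_i \in c N.
  elim: (size s) sU => [|n IH] hsU; first by exists 0%N.
  have [N1 h1] := IH (fun i hi => hsU i (ltnW hi)).
  have /asboolP [N2 h2] := hsU n (ltnSn n).
  exists (N1 + N2)%N => i; rewrite ltnS leq_eqVlt => /predU1P [->|hi].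
    by rewrite addnC; apply: mono.
  exact/mono/h1.
exists N => x xc; have /hs [d [_ ->]] : x \in U by apply/asboolP; exists N.+1.
exact: ideal_sum.
Qed.

Lemma noetherian_prime_product I :
  noetherian_ring R -> is_ideal I -> contains_prime_product I.
Proof.
move=> hN hI; apply: contrapT => bad.
pose next J : {pred R} :=
  if pselect (is_ideal J /\ ~ contains_prime_product J) is left h
  then sval (cid (no_prime_product_strict_sup h.1 h.2)) else J.
have nextP J : is_ideal J -> ~ contains_prime_product J ->
    [/\ is_ideal (next J), ~ contains_prime_product (next J), {subset J <= next J} &
        exists2 x, x \in next J & x \notin J].
  by move=> h1 h2; rewrite /next; case: pselect => [h|[]]; [case: cid | split].
pose c n := iter n next I.
have cbad n : is_ideal (c n) /\ ~ contains_prime_product (c n).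
  by elim: n => [|n [h1 h2]] //; have [] := nextP _ h1 h2.
have [N cN] : exists N, {subset c N.+1 <= c N}.
  apply: noetherian_chain_stationary => // [n | n]; first by case: (cbad n).
  by have [h1 h2] := cbad n; have [] := nextP _ h1 h2.
have [h1 h2] := cbad N; have [_ _ _ [x xc]] := nextP _ h1 h2.
by move/cN: xc => ->.
Qed.

Lemma maximal_ideal_prime P : maximal_ideal P -> prime_ideal P.
Proof.
move=> [hP P1 Pmax]; split => // u v uv.
have [uP|uP] := pselect (u \in P); [by left | right].
have [/asboolP [a [b [bP e]]]|] := boolP (1 \in ideal_adjoin P u); last first.
  move=> h; case: uP; apply: (Pmax _ (ideal_adjoin_ideal u hP) _ h).
    exact: ideal_adjoin_sub.
  exact: ideal_adjoin_mem.
have -> : v = a * (u * v) + v * b by rewrite mulrA [v * b]mulrC -mulrDl -e mul1r.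
exact: (idealD hP (idealMl _ hP uv) (idealMl _ hP bP)).
Qed.

End Ideals.

Section MaximalIdeals.
Variable R : idomainType.
Implicit Types (P : maxideal R) (Q : {pred R}).

Lemma maxideal_ideal P : is_ideal P.
Proof. by case: (mi_max P). Qed.

Lemma maxideal_neq1 P : 1 \notin P.
Proof. by case: (mi_max P). Qed.

Lemma maxideal_mul_notin P s t : s \notin P -> t \notin P -> s * t \notin P.
Proof.
have [_ _ Pp] := maximal_ideal_prime (mi_max P).
by move=> sP tP; apply/negP => /Pp [] h; [move: sP | move: tP]; rewrite h.
Qed.

Lemma maxideal_ext P P' : P =i P' -> P = P'.
Proof.
case: P P' => p hp [q hq] /= pq; have e : p = q by apply/funext => x; exact: pq.
by subst; congr MaxIdeal; exact: Prop_irrelevance.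
Qed.

Lemma maxideal_list (L : list {pred R}) :
  (forall Q, List.In Q L -> maximal_ideal Q) ->
  exists l : list (maxideal R),
    forall P, (exists2 Q, List.In Q L & P =i Q) -> List.In P l.
Proof.
elim: L => [|Q L IH] hL; first by exists nil => P [].
have [l hl] := IH (fun Q' h => hL Q' (or_intror h)).
exists (MaxIdeal (hL Q (or_introl erefl)) :: l) => P [Q' [<-|Q'L] PQ'].
  by left; apply: maxideal_ext => x; rewrite PQ'.
by right; apply: hl; exists Q'.
Qed.

Lemma dedekind_finite_maximal_over (r : R) : dedekind_domain R -> r != 0 ->
  exists l : list (maxideal R), forall P, r \in P -> List.In P l.
Proof.
move=> [hN _ prime_max] r0.
pose rR : {pred R} := fun x => `[< exists a, x = a * r >].
have rR_ideal : is_ideal rR.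
  split; first by apply/asboolP; exists 0; rewrite mul0r.
  move=> a _ _ /asboolP [b ->] /asboolP [c ->]; apply/asboolP.
  by exists (a * b + c); rewrite mulrA -mulrDl.
have r_rR : r \in rR by apply/asboolP; exists 1; rewrite mul1r.
have [L [hL prodL]] := noetherian_prime_product hN rR_ideal.
have maxL Q : List.In Q L -> maximal_ideal Q.
  by move=> /hL [pQ sQ]; apply: prime_max pQ _; exists r => //; apply: sQ.
have [l hl] := maxideal_list maxL.
exists l => P rP; apply: hl.
have [Q QL QP] : exists2 Q, List.In Q L & {subset Q <= P}.
  apply: contrapT => noQ.
  have outP Q : List.In Q L -> exists2 x, x \in Q & x \notin P.
    move=> QL; apply: contrapT => hQ; apply: noQ; exists Q => // x xQ.
    by apply: contrapT => /negP xP; apply: hQ; exists x.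
  have [_ /asboolP [a ->]] :=
    all_products_avoid_prime (maximal_ideal_prime (mi_max P)) prodL outP.
  by rewrite (idealMl _ (maxideal_ideal P) rP).
have [_ _ Qmax] := maxL Q QL.
exists Q => // x; apply/idP/idP => [|/QP //].
exact: (Qmax _ (maxideal_ideal P) QP (maxideal_neq1 P)).
Qed.

End MaximalIdeals.

Section Localization.
Variable R : idomainType.
Implicit Types (P : maxideal R) (q : {fraction R}) (f g h : prodQ R).

Lemma fraction_repr q : exists a b : R, b != 0 /\ q = a%:F / b%:F.
Proof.
elim/quotW: q => x; exists x.1, x.2; split; first exact: denom_ratioP.
have <- : x.2%:F * \pi_{fraction R} x = x.1%:F.
  unlock FracField.tofrac; rewrite -[_ * _]FracField.pi_mul.
  apply/eqmodP => /=; rewrite /FracField.equivf /FracField.mulf /=.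
  by rewrite !numden_Ratio ?oner_neq0 ?mulr1 ?mul1r ?denom_ratioP.
by rewrite mulrAC divff ?mul1r // tofrac_eq0 denom_ratioP.
Qed.

Lemma tofrac_notin_neq0 P s : s \notin P -> s%:F != 0.
Proof.
by rewrite tofrac_eq0; apply: contraNneq => ->; apply: ideal0 (maxideal_ideal P).
Qed.

Lemma in_loc_tofrac P a : in_loc P a%:F.
Proof. by exists a, 1; rewrite tofrac1 divr1 maxideal_neq1. Qed.

Lemma in_loc0 P : in_loc P 0.
Proof. by rewrite -tofrac0; apply: in_loc_tofrac. Qed.

Lemma in_locD P q1 q2 : in_loc P q1 -> in_loc P q2 -> in_loc P (q1 + q2).
Proof.
move=> [a1 [s1 [s1P ->]]] [a2 [s2 [s2P ->]]].
exists (a1 * s2 + a2 * s1), (s1 * s2); rewrite maxideal_mul_notin //; split=> //.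
by rewrite tofracD !tofracM addf_div ?(tofrac_notin_neq0 s1P, tofrac_notin_neq0 s2P).
Qed.

Lemma in_locMl P a q : in_loc P q -> in_loc P (a%:F * q).
Proof. by move=> [b [s [sP ->]]]; exists (a * b), s; rewrite tofracM mulrA. Qed.

Lemma in_locN P q : in_loc P q -> in_loc P (- q).
Proof. by move=> /(in_locMl (-1)); rewrite tofracN tofrac1 mulN1r. Qed.

Lemma prod_eq_pointwise f g : (forall P, f P = g P) -> prod_eq f g.
Proof. by move=> fg P; rewrite fg subrr; apply: in_loc0. Qed.

Lemma prod_eq_refl f : prod_eq f f.
Proof. exact: prod_eq_pointwise. Qed.

Lemma prod_eq_sym f g : prod_eq f g -> prod_eq g f.
Proof. by move=> fg P; rewrite -opprB; apply: in_locN. Qed.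

Lemma prod_eq_trans f g h : prod_eq f g -> prod_eq g h -> prod_eq f h.
Proof. by move=> fg gh P; have := in_locD (fg P) (gh P); rewrite addrA subrK. Qed.

Lemma prod_eq_lin (a b : R) f1 g1 f2 g2 : prod_eq f1 g1 -> prod_eq f2 g2 ->
  prod_eq (fun P => a%:F * f1 P + b%:F * f2 P) (fun P => a%:F * g1 P + b%:F * g2 P).
Proof.
move=> e1 e2 P; have := in_locD (in_locMl a (e1 P)) (in_locMl b (e2 P)).
by rewrite opprD addrACA -!mulrBr.
Qed.

Lemma prod_eq_addl f g h : prod_eq g h -> prod_eq (fun P => f P + g P) (fun P => f P + h P).
Proof. by move=> e P; rewrite opprD addrACA subrr add0r; apply: e. Qed.

Lemma prod_eq_subr f g h :
  prod_eq f (fun P => g P + h P) -> prod_eq (fun P => f P - g P) h.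
Proof. by move=> e P; rewrite -addrA -opprD; apply: e. Qed.

Lemma prod_eq_subl f g h :
  prod_eq (fun P => f P + g P) h -> prod_eq f (fun P => h P - g P).
Proof. by move=> e P; rewrite opprB addrA; apply: e. Qed.

End Localization.

Section Torsion.
Variable R : idomainType.
Implicit Types (P : maxideal R) (f : prodQ R).

Lemma common_denominator f (l : list (maxideal R)) :
  exists2 r : R, r != 0 & forall P, List.In P l -> in_loc P (r%:F * f P).
Proof.
elim: l => [|P l [r r0 hr]]; first by exists 1; rewrite ?oner_neq0.
have [a [b [b0 fP]]] := fraction_repr (f P).
exists (r * b); first by rewrite mulf_neq0.
move=> Q [<-|Ql]; last by rewrite tofracM [r%:F * _]mulrC -mulrA; apply/in_locMl/hr.
have -> : (r * b)%:F * f P = (r * a)%:F.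
  by rewrite fP !tofracM -mulrA [b%:F * _]mulrC divfK // tofrac_eq0.
exact: in_loc_tofrac.
Qed.

Lemma torsion_in_dsum f :
  dedekind_domain R -> prod_torsion f -> prod_in_dsum f.
Proof.
move=> hR [r r0 rf]; have [l hl] := dedekind_finite_maximal_over hR r0.
exists l => P fP; apply: hl; apply: contrapT => /negP rP; apply: fP.
have [a [s [sP]]] := rf P; rewrite /prod_scale subr0 => rfP.
exists a, (s * r); rewrite maxideal_mul_notin //; split=> //.
have rF : r%:F != 0 by rewrite tofrac_eq0.
apply: (mulfI rF).
by rewrite rfP tofracM invfM mulrCA [r%:F * _]mulrCA divff // mulr1.
Qed.

Lemma dsum_torsion f : prod_in_dsum f -> prod_torsion f.
Proof.
move=> [l hl]; have [r r0 hr] := common_denominator f l.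
exists r => // P; rewrite /prod_scale subr0.
have [/hr //|Pl] := pselect (List.In P l).
by apply: in_locMl; apply: contrapT => /hl.
Qed.

End Torsion.

Section Combinations.
Variables (R : idomainType) (g : nat -> prodQ R).
Local Notation Q := {fraction R}.
Implicit Types (c d : seq Q) (f h w : prodQ R).

Definition lincomb c : prodQ R := fun P => \sum_(i < size c) c`_i * g i P.

Definition q_independent : Prop :=
  forall c, prod_eq (lincomb c) (fun _ => 0) -> forall i, c`_i = 0.

Definition combine (a b : Q) c d : seq Q :=
  mkseq (fun i => a * c`_i + b * d`_i) (maxn (size c) (size d)).

Lemma nth_combine a b c d i : (combine a b c d)`_i = a * c`_i + b * d`_i.
Proof.
rewrite /combine; case: (ltnP i (maxn (size c) (size d))) => [|hi].
  by move=> hi; rewrite nth_mkseq.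
move: hi; rewrite geq_max => /andP [ci di].
by rewrite nth_default ?size_mkseq ?geq_max ?ci // !nth_default // !mulr0 addr0.
Qed.

Lemma lincomb_widen c n P : (size c <= n)%N ->
  lincomb c P = \sum_(i < n) c`_i * g i P.
Proof.
move=> cn; rewrite /lincomb -!(big_mkord xpredT (fun i => c`_i * g i P)).
rewrite [RHS](@big_cat_nat _ _ _ (size c)) //= [X in _ + X]big1_seq ?addr0 //.
by move=> i /andP [_]; rewrite mem_index_iota => /andP [ci _]; rewrite nth_default ?mul0r.
Qed.

Lemma lincomb_lin a b c d e P : (forall i, e`_i = a * c`_i + b * d`_i) ->
  lincomb e P = a * lincomb c P + b * lincomb d P.
Proof.
move=> eE; pose n := maxn (size e) (maxn (size c) (size d)).
have [en cn dn] : [/\ size e <= n, size c <= n & size d <= n]%N.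
  by rewrite /n !leq_max !leqnn !orbT.
rewrite !(lincomb_widen _ en, lincomb_widen _ cn, lincomb_widen _ dn).
by rewrite !mulr_sumr -big_split; apply: eq_bigr => i _ /=; rewrite eE mulrDl -!mulrA.
Qed.

Lemma lincomb_eq c d P : (forall i, c`_i = d`_i) -> lincomb c P = lincomb d P.
Proof.
move=> cd; rewrite (@lincomb_lin 1 0 d d) ?mul1r ?mul0r ?addr0 // => i.
by rewrite cd mul1r mul0r addr0.
Qed.

(* [W] is a set of representatives of an R-submodule of [prod_P Q/R_P]
   meeting the Q-span of [g] trivially. *)
Definition complement_candidate (W : prodQ R -> Prop) : Prop :=
  [/\ forall f h, prod_eq f h -> W f -> W h,
      forall (a b : R) f h, W f -> W h -> W (fun P => a%:F * f P + b%:F * h P) &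
      forall c, W (lincomb c) -> forall i, c`_i = 0].

Lemma zero_candidate :
  q_independent -> complement_candidate (fun f => prod_eq f (fun _ => 0)).
Proof.
move=> indep; split=> [f h fh f0 | a b f h f0 h0 | c /indep //].
  exact: prod_eq_trans (prod_eq_sym fh) f0.
apply: prod_eq_trans (prod_eq_lin a b f0 h0) _.
by apply: prod_eq_pointwise => P; rewrite !mulr0 addr0.
Qed.

Lemma candidate_union (F : {pred prodQ R -> Prop}) :
  {in F, forall W, complement_candidate W} ->
  {in F &, forall W1 W2, (forall f, W1 f -> W2 f) \/ (forall f, W2 f -> W1 f)} ->
  complement_candidate (fun f => exists2 W, W \in F & W f).
Proof.
move=> Fcand Ftot; split.
- move=> f h fh [W FW Wf]; exists W => //.
  by have [Wsat _ _] := Fcand W FW; apply: Wsat fh Wf.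
- move=> a b f h [W1 FW1 W1f] [W2 FW2 W2h].
  have [W12|W21] := Ftot W1 W2 FW1 FW2.
    by exists W2 => //; have [_ Wlin _] := Fcand W2 FW2; apply/Wlin/W2h/W12.
  by exists W1 => //; have [_ Wlin _] := Fcand W1 FW1; apply/Wlin/W21.
- by move=> c [W FW Wc]; have [_ _ Wfree] := Fcand W FW; apply: Wfree.
Qed.

Lemma exists_maximal_candidate : q_independent ->
  exists W, [/\ complement_candidate W, W (fun _ => 0) &
    forall W', complement_candidate W' -> (forall f, W f -> W' f) ->
      forall f, W' f -> W f].
Proof.
move=> indep; pose Z f := prod_eq f (fun _ => 0).
pose le (W1 W2 : prodQ R -> Prop) := `[< forall f, W1 f -> W2 f >].
pose S : {pred prodQ R -> Prop} := fun W => `[< complement_candidate W /\ W (fun _ => 0) >].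
have ZS W : W \in S -> le Z W.
  move=> /asboolP [[Wsat _ _] W0]; apply/asboolP => f f0.
  exact: Wsat (prod_eq_sym f0) W0.
have [W /asboolP [Wcand W0] Wmax] : {W | W \in S & {in S, maximal le W}}.
  apply: Zorn's_lemma.
  - by move=> W _; apply/asboolP.
  - by move=> W2 W1 W3 _ _ _ /asboolP h12 /asboolP h23; apply/asboolP => f /h12 /h23.
  (* [Z] is added to the chain so that even the empty chain has its union in [S]. *)
  - move=> C CS /wo_chainW Ctot; pose C' := predU1 Z C.
    have C'cand : {in C', forall W, complement_candidate W}.
      by move=> W /predU1P [->|/CS /asboolP []//]; exact: zero_candidate.
    have C'tot : {in C' &, forall W1 W2,
        (forall f, W1 f -> W2 f) \/ (forall f, W2 f -> W1 f)}.
      move=> W1 W2 /predU1P [->|C1] /predU1P [->|C2]; try by left.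
      + by left; apply/asboolP/ZS/CS.
      + by right; apply/asboolP/ZS/CS.
      + by have /orP [] := Ctot W1 W2 C1 C2 => /asboolP; [left | right].
    exists (fun f => exists2 W, W \in C' & W f).
      apply/asboolP; split; first exact: candidate_union.
      by exists Z; [exact: predU1l | exact: prod_eq_refl].
    by move=> W CW; apply/asboolP => f Wf; exists W => //; apply: predU1r.
exists W; split => // W' W'cand WW'.
have W'S : W' \in S by apply/asboolP; split => //; apply: WW'.
by apply/asboolP/(Wmax _ W'S)/asboolP.
Qed.

End Combinations.

Section Complement.
Variables (R : idomainType) (g : nat -> prodQ R) (W : prodQ R -> Prop).
Hypotheses (Wcand : complement_candidate g W) (W0 : W (fun _ => 0))
  (Wmax : forall W', complement_candidate g W' -> (forall f, W f -> W' f) ->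
            forall f, W' f -> W f).
Local Notation Q := {fraction R}.
Local Notation L := (lincomb g).
Implicit Types (c d : seq Q) (f h m w : prodQ R).

Lemma candidate_adjoin m :
  (forall c (s : R) w, W w -> prod_eq (L c) (fun P => w P + s%:F * m P) ->
     forall i, c`_i = 0) -> W m.
Proof.
move=> free; have [Wsat Wlin _] := Wcand.
pose W' f := exists (s : R) w, W w /\ prod_eq f (fun P => w P + s%:F * m P).
apply: (Wmax (W' := W')).
- split.
  + move=> f h fh [s [w [Ww e]]]; exists s, w; split => //.
    exact: prod_eq_trans (prod_eq_sym fh) e.
  + move=> a b f h [s1 [w1 [Ww1 e1]]] [s2 [w2 [Ww2 e2]]].
    exists (a * s1 + b * s2), (fun P => a%:F * w1 P + b%:F * w2 P).
    split; first exact: Wlin.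
    apply: prod_eq_trans (prod_eq_lin a b e1 e2) _; apply: prod_eq_pointwise => P.
    by rewrite tofracD !tofracM mulrDl -!mulrA !mulrDr addrACA.
  + by move=> c [s [w [Ww e]]]; apply: free e.
- move=> f Wf; exists 0, f; split => //.
  by apply: prod_eq_pointwise => P; rewrite tofrac0 mul0r addr0.
- exists 1, (fun _ => 0); split => //.
  by apply: prod_eq_pointwise => P; rewrite tofrac1 mul1r add0r.
Qed.

Lemma lincomb_nil P : L [::] P = 0.
Proof. exact: big_ord0. Qed.

Lemma candidate_multiple_decomposition m : exists (r : R) c w,
  [/\ r != 0, W w & prod_eq (fun P => r%:F * m P) (fun P => L c P + w P)].
Proof.
have [Wsat Wlin Wfree] := Wcand.
apply: contrapT => nodec.
suff Wm : W m.
  apply: nodec; exists 1, [::], m; split; rewrite ?oner_neq0 //.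
  by apply: prod_eq_pointwise => P; rewrite tofrac1 mul1r lincomb_nil add0r.
apply: candidate_adjoin => c s w Ww e.
have [s0|s0] := eqVneq s 0.
  apply: Wfree; apply: Wsat Ww; apply: prod_eq_sym; apply: prod_eq_trans e _.
  by apply: prod_eq_pointwise => P; rewrite s0 tofrac0 mul0r addr0.
exfalso; apply: nodec; exists s, c, (fun P => (-1)%:F * w P + 0%:F * w P).
split => //; first exact: Wlin.
have e' : prod_eq (fun P => s%:F * m P + w P) (L c).
  exact: prod_eq_trans (prod_eq_pointwise (fun P => addrC _ _)) (prod_eq_sym e).
apply: prod_eq_trans (prod_eq_subl e') _.
by apply: prod_eq_pointwise => P; rewrite tofrac0 tofracN tofrac1 mul0r addr0 mulN1r.
Qed.

Lemma candidate_decomposition m :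
  exists p : seq Q * prodQ R, W p.2 /\ prod_eq m (fun P => L p.1 P + p.2 P).
Proof.
have [Wsat Wlin Wfree] := Wcand.
have [r [c [w [r0 Ww e]]]] := candidate_multiple_decomposition m.
have rF : r%:F != 0 by rewrite tofrac_eq0.
pose c' := combine r%:F^-1 0 c c.
have Lc' P : L c' P = r%:F^-1 * L c P.
  by rewrite (lincomb_lin g P (nth_combine _ _ c c)) mul0r addr0.
pose m' P := m P - L c' P.
exists (c', m'); split; last first.
  by apply: prod_eq_pointwise => P; rewrite /m' /= addrC subrK.
apply: candidate_adjoin => d s w2 Ww2 e2 i.
have Wrd : W (L (combine r%:F 0 d d)).
  apply: Wsat (Wlin r s _ _ Ww2 Ww); apply: prod_eq_sym.
  apply: prod_eq_trans _ (prod_eq_lin r s (prod_eq_refl w2) (prod_eq_subr e)).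
  apply: prod_eq_trans (prod_eq_trans _ (prod_eq_lin r 0 e2 (prod_eq_refl w))) _.
    apply: prod_eq_pointwise => P.
    by rewrite (lincomb_lin g P (nth_combine _ _ d d)) tofrac0 !mul0r !addr0.
  apply: prod_eq_pointwise => P.
  by rewrite tofrac0 mul0r addr0 mulrDr /m' /= Lc' mulrCA mulrBr mulVKf.
have /Wfree /(_ i) /eqP := Wrd.
by rewrite nth_combine mul0r addr0 mulf_eq0 (negbTE rF) => /eqP.
Qed.

Lemma decomposition_unique c c' w w' : W w -> W w' ->
  prod_eq (fun P => L c P + w P) (fun P => L c' P + w' P) ->
  (forall i, c`_i = c'`_i) /\ prod_eq w w'.
Proof.
have [Wsat Wlin Wfree] := Wcand.
move=> Ww Ww' e; pose d := combine 1 (-1) c c'.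
have Ld P : L d P = L c P - L c' P.
  by rewrite (lincomb_lin g P (nth_combine _ _ c c')) mul1r mulN1r.
have cc' i : c`_i = c'`_i.
  apply/eqP; rewrite -subr_eq0 -mulN1r -[c`_i]mul1r -nth_combine.
  apply/eqP/Wfree; apply: Wsat (Wlin (-1) 1 _ _ Ww Ww'); apply: prod_eq_sym.
  have e' : prod_eq (fun P => (L c P - L c' P) + w P) w'.
    by apply: (prod_eq_trans (prod_eq_pointwise _) (prod_eq_subr e)) => P; rewrite addrAC.
  apply: prod_eq_trans (prod_eq_trans (prod_eq_pointwise Ld) (prod_eq_subl e')) _.
  by apply: prod_eq_pointwise => P; rewrite tofracN tofrac1 mulN1r mul1r addrC.
split => // P; have := e P.
by rewrite (lincomb_eq g P cc') opprD addrACA subrr add0r.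
Qed.

Definition decomposition m : seq Q * prodQ R :=
  sval (cid (candidate_decomposition m)).

Lemma decompositionP m : W (decomposition m).2 /\
  prod_eq m (fun P => L (decomposition m).1 P + (decomposition m).2 P).
Proof. exact: svalP (cid (candidate_decomposition m)). Qed.

Lemma decomposition_lin (a b : R) m1 m2 m :
  prod_eq m (fun P => a%:F * m1 P + b%:F * m2 P) ->
  (forall i, (decomposition m).1`_i =
             a%:F * (decomposition m1).1`_i + b%:F * (decomposition m2).1`_i) /\
  prod_eq (decomposition m).2
          (fun P => a%:F * (decomposition m1).2 P + b%:F * (decomposition m2).2 P).
Proof.
have [_ Wlin _] := Wcand; move=> e.
have [W1 e1] := decompositionP m1; have [W2 e2] := decompositionP m2.
have [W3 e3] := decompositionP m.
pose c := combine a%:F b%:F (decomposition m1).1 (decomposition m2).1.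
have e12 : prod_eq (fun P => a%:F * m1 P + b%:F * m2 P) (fun P =>
    L c P + (a%:F * (decomposition m1).2 P + b%:F * (decomposition m2).2 P)).
  apply: prod_eq_trans (prod_eq_lin a b e1 e2) (prod_eq_pointwise _) => P.
  by rewrite (lincomb_lin g P (nth_combine _ _ _ _)) !mulrDr addrACA.
have [cE wE] := decomposition_unique W3 (Wlin a b _ _ W1 W2)
  (prod_eq_trans (prod_eq_sym e3) (prod_eq_trans e e12)).
by split => // i; rewrite cE nth_combine.
Qed.

(* [(q, sum_i c_i g_i + w) |-> q g_0 + sum_i c_i g_(i+1) + w] *)
Definition shift_iso (x : sumQ R) : prodQ R :=
  fun P => L (x.1 :: (decomposition x.2).1) P + (decomposition x.2).2 P.

Lemma shift_iso_lin (a b : R) x y z :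
  z.1 = a%:F * x.1 + b%:F * y.1 ->
  prod_eq z.2 (fun P => a%:F * x.2 P + b%:F * y.2 P) ->
  prod_eq (shift_iso z) (fun P => a%:F * shift_iso x P + b%:F * shift_iso y P).
Proof.
move=> e1 e2; have [cE wE] := decomposition_lin e2.
apply: prod_eq_trans (prod_eq_addl _ wE) (prod_eq_pointwise _) => P.
have zE i : (z.1 :: (decomposition z.2).1)`_i =
    a%:F * (x.1 :: (decomposition x.2).1)`_i + b%:F * (y.1 :: (decomposition y.2).1)`_i.
  by case: i => [|i] /=; rewrite ?cE.
by rewrite (lincomb_lin g P zE) !mulrDr addrACA.
Qed.

Lemma shift_iso_inj x y : prod_eq (shift_iso x) (shift_iso y) -> Defs.sum_eq x y.
Proof.
move=> e; have [Wx ex] := decompositionP x.2; have [Wy ey] := decompositionP y.2.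
have [cE wE] := decomposition_unique Wx Wy e.
split; first exact: (cE 0%N).
apply: prod_eq_trans ex (prod_eq_trans _ (prod_eq_sym ey)).
apply: prod_eq_trans (prod_eq_addl _ wE) (prod_eq_pointwise _) => P.
by congr (_ + _); apply: lincomb_eq => i; apply: (cE i.+1).
Qed.

Lemma shift_iso_surj t : exists x, prod_eq (shift_iso x) t.
Proof.
have [Wt et] := decompositionP t.
set c := (decomposition t).1; set w := (decomposition t).2.
pose m P := L (behead c) P + w P.
exists (c`_0, m); have [Wm em] := decompositionP m.
have [cE wE] := decomposition_unique Wm Wt (prod_eq_sym em).
apply: prod_eq_trans (prod_eq_addl _ wE)
  (prod_eq_trans (prod_eq_pointwise _) (prod_eq_sym et)) => P.
by congr (_ + _); apply: lincomb_eq => -[|i] //=; rewrite cE nth_behead.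
Qed.

Lemma shift_iso_sum_prod_iso : sum_prod_iso shift_iso.
Proof.
have lin10 (a : R) f :
    prod_eq (fun P => a%:F * f P) (fun P => a%:F * f P + 0%:F * f P).
  by apply: prod_eq_pointwise => P; rewrite tofrac0 mul0r addr0.
split.
- move=> x y [e1 e2].
  apply: prod_eq_trans (shift_iso_lin (a := 1) (b := 0) (y := y) _ _) _.
  + by rewrite e1 tofrac1 tofrac0 mul1r mul0r addr0.
  + apply: prod_eq_trans e2 _; apply: prod_eq_trans (lin10 1 _).
    by apply: prod_eq_pointwise => P; rewrite tofrac1 !mul1r.
  + by apply: prod_eq_pointwise => P; rewrite tofrac1 tofrac0 mul1r mul0r addr0.
- move=> x y; apply: prod_eq_trans (shift_iso_lin (a := 1) (b := 1) _ _) _.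
  + by rewrite tofrac1 !mul1r.
  + by apply: prod_eq_pointwise => P; rewrite tofrac1 !mul1r.
  + by apply: prod_eq_pointwise => P; rewrite tofrac1 !mul1r.
- move=> r x.
  apply: prod_eq_trans (shift_iso_lin (a := r) (b := 0) (y := x) _ _) _.
  + by rewrite tofrac0 mul0r addr0.
  + exact: lin10.
  + exact: prod_eq_sym (lin10 r _).
- exact: shift_iso_inj.
- exact: shift_iso_surj.
Qed.

End Complement.

Lemma independent_sum_prod_iso (R : idomainType) (g : nat -> prodQ R) :
  q_independent g -> exists phi : sumQ R -> prodQ R, sum_prod_iso phi.
Proof.
move=> indep; have [W [Wcand W0 Wmax]] := exists_maximal_candidate indep.
by exists (shift_iso Wcand W0 Wmax); apply: shift_iso_sum_prod_iso.
Qed.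

Definition pair_index (i j : nat) : nat := (2 ^ i * j.*2.+1).-1.

Lemma pair_indexS i j : (pair_index i j).+1 = (2 ^ i * j.*2.+1)%N.
Proof. by rewrite prednK // muln_gt0 expn_gt0. Qed.

Lemma logn_pair_index i j : logn 2 (pair_index i j).+1 = i.
Proof.
rewrite pair_indexS lognM ?expn_gt0 // lognX logn_prime // eqxx muln1.
by rewrite logn_coprime ?addn0 // coprime2n /= odd_double.
Qed.

Lemma pair_index_inj i : injective (pair_index i).
Proof.
move=> j1 j2 /(congr1 S); rewrite !pair_indexS => /eqP.
by rewrite eqn_pmul2l ?expn_gt0 // -!muln2 eqSS eqn_pmul2r // => /eqP.
Qed.

Lemma injective_avoid (T : Type) (h : nat -> T) (l : list T) :
  injective h -> exists j, ~ List.In (h j) l.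
Proof.
move=> hinj; suff avoid N : exists j, (N <= j)%N /\ ~ List.In (h j) l.
  by have [j [_ jl]] := avoid 0%N; exists j.
elim: l N => [|a l IH] N; first by exists N; split.
have [j1 [Nj1 j1l]] := IH N; have [j1a|j1a] := pselect (h j1 = a); last first.
  by exists j1; split => // -[/esym|].
have [j2 [j12 j2l]] := IH j1.+1.
exists j2; split; first exact: leq_trans Nj1 (ltnW j12).
by case=> [|//]; rewrite -j1a => /hinj j21; rewrite j21 ltnn in j12.
Qed.

Section NotSemilocal.
Variable R : idomainType.
Hypothesis nsl : ~ semilocal R.
Implicit Types P : maxideal R.

Lemma maxideal_nonzero P : exists2 x, x \in P & x != 0.
Proof.
apply: contrapT => P0; apply: nsl; exists [:: P] => Q; left.
have PQ : {subset P <= Q}.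
  move=> x xP; have /eqP -> : x == 0.
    by apply: contrapT => /negP x0; apply: P0; exists x.
  exact: ideal0 (maxideal_ideal Q).
have [_ _ Pmax] := mi_max P.
have QP := Pmax _ (maxideal_ideal Q) PQ (maxideal_neq1 Q).
by apply: maxideal_ext => x; apply/idP/idP => [/PQ|/QP].
Qed.

Lemma maxideal_sequence : exists Pk : nat -> maxideal R, injective Pk.
Proof.
have fresh (l : list (maxideal R)) : {P | ~ List.In P l}.
  apply: cid; apply: contrapT => /forallNP all; apply: nsl; exists l => P.
  exact: contrapT (all P).
pose fix prefix n :=
  if n is n'.+1 then sval (fresh (prefix n')) :: prefix n' else nil.
have inprefix m n : (m < n)%N -> List.In (sval (fresh (prefix m))) (prefix n).
  elim: n => [//|n IH]; rewrite ltnS leq_eqVlt => /predU1P [->|mn]; first by left.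
  by right; apply: IH.
exists (fun n => sval (fresh (prefix n))) => m n e.
case: (ltngtP m n) => // [mn|nm].
  by case: (svalP (fresh (prefix n))); rewrite -e; apply: inprefix.
by case: (svalP (fresh (prefix m))); rewrite e; apply: inprefix.
Qed.

(* [g i] is [1/x_P] on the maximal ideals [P = P_k] with [2^i || k+1], where
   [x_P] is a nonzero element of [P], and 0 elsewhere: the [g i] have disjoint
   infinite supports and their coordinates are all outside the [R_P]. *)
Lemma exists_q_independent :
  dedekind_domain R -> exists g : nat -> prodQ R, q_independent g.
Proof.
move=> hR; have [Pk Pk_inj] := maxideal_sequence.
pose x P := sval (cid2 (maxideal_nonzero P)).
have xP P : x P \in P by rewrite /x; case: cid2.
have x0 P : x P != 0 by rewrite /x; case: cid2.
pose g i P : {fraction R} :=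
  if pselect (exists k, P = Pk k /\ logn 2 k.+1 = i) then (x P)%:F^-1 else 0.
have gE i k : g i (Pk k) = if logn 2 k.+1 == i then (x (Pk k))%:F^-1 else 0.
  rewrite /g; case: pselect => [[k' [kk' ki]]|nk] /=.
    by rewrite (Pk_inj _ _ kk') ki eqxx.
  by case: eqP => // ki; case: nk; exists k.
exists g => c c0 i; have [ci|ci] := ltnP i (size c); last by rewrite nth_default.
apply: contrapT => /eqP cin0.
have [a [b [b0 cE]]] := fraction_repr c`_i.
have a0 : a != 0 by apply: contraNneq cin0 => a0; rewrite cE a0 tofrac0 mul0r.
have [l al] := dedekind_finite_maximal_over hR a0.
have [j jl] := injective_avoid l (inj_comp Pk_inj (@pair_index_inj i)).
set P := Pk (pair_index i j) in jl; have aP : a \notin P by apply/negP => /al.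
have [a' [s [sP]]] := c0 P.
rewrite subr0 /lincomb (bigD1 (Ordinal ci)) //= big1; last first.
  move=> i' i'i; rewrite /P gE logn_pair_index.
  rewrite (_ : (i == i') = false) ?mulr0 //; apply/negbTE.
  by apply: contra i'i => /eqP ii'; apply/eqP/val_inj.
rewrite addr0 /P gE logn_pair_index eqxx -/P cE => e.
have xF : (x P)%:F != 0 by rewrite tofrac_eq0.
have bF : b%:F != 0 by rewrite tofrac_eq0.
move: e; rewrite -mulrA -invfM => /eqP.
rewrite eqr_div ?mulf_neq0 ?(tofrac_notin_neq0 sP) // -!tofracM tofrac_eq => /eqP asE.
have := maxideal_mul_notin aP sP; rewrite asE.
by rewrite !(idealMl _ (maxideal_ideal P)).
Qed.

End NotSemilocal.

Theorem mainTheorem10 (R : idomainType) (hR : dedekind_domain R) :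
  (forall f : prodQ R, prod_torsion f <-> prod_in_dsum f) /\
  (~ semilocal R -> card_lt R (maxideal R -> R) ->
   exists phi : sumQ R -> prodQ R, sum_prod_iso phi).
Proof.
split=> [f | nsl _]; first by split; [exact: torsion_in_dsum | exact: dsum_torsion].
have [g indep] := exists_q_independent nsl hR.
exact: independent_sum_prod_iso indep.
Qed.
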